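(* Let $\Lambda$ be a selfinjective artin algebra of infinite representation type with $\operatorname{rad}^3\Lambda=0$, let $A=\Lambda/\operatorname{Soc}\Lambda$, and let $F\colon\operatorname{mod}A\to\operatorname{mod}H$ be the functor described in the context. Let $0\to C\xrightarrow{\alpha}B\xrightarrow{\beta}S\to 0$ be a short exact sequence in $\operatorname{mod}A$ with $S$ a simple $\Lambda$-module. If $C$ does not contain any simple direct summand, then the sequence $0\to F(C)\to F(B)\to F(S)\to 0$ is also exact.
   Context: Here $\operatorname{rad}^2A=0$. Let $\mathfrak r_A$ be the radical of $A$ and $\bar A=A/\mathfrak r_A$. $H$ is the hereditary triangular matrix algebra $H=\begin{pmatrix}\bar A&0\\ \mathfrak r_A&\bar A\end{pmatrix}$, whose modules are triples $(U,V,f)$ with $U,V$ $\bar A$-modules and $f\colon \mathfrak r_A\otimes_{\bar A}U\to V$ an $\bar A$-homomorphism. The functor $F$ sends an $A$-module $X$ to $(X/\mathfrak r_AX,\ \mathfrak r_AX,\ f_X)$ where $f_X$ is induced by multiplication, and acts on morphisms by the induced maps; it induces an equivalence of stable categories $\underline{\operatorname{mod}}A\simeq\underline{\operatorname{mod}}H$. A sequence of $H$-modules $(U_i,V_i,f_i)$ is exact iff the sequences of $U$-components and of $V$-components are exact. *)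

From HB Require Import structures.
From mathcomp Require Import all_boot all_order all_algebra.
Set Implicit Arguments. Unset Strict Implicit. Unset Printing Implicit Defensive.
Import GRing.Theory.
Local Open Scope ring_scope.

Section ModuleNotions.
Variable L : nzRingType.

Definition lin (M N : lmodType L) (f : M -> N) : Prop :=
  forall (a : L) (x y : M), f (a *: x + y) = a *: f x + f y.

Definition submod (M : lmodType L) (P : M -> Prop) : Prop :=
  P 0 /\ (forall (a : L) (x y : M), P x -> P y -> P (a *: x + y)).

Definition fingen (M : lmodType L) : Prop :=
  exists s : seq M, forall x : M, exists c : seq L,
    x = \sum_(i < size s) c`_i *: s`_i.

Definition simple_sub (M : lmodType L) (U : M -> Prop) : Prop :=
  [/\ submod U, (exists x, U x /\ x <> 0) &
      forall W : M -> Prop, submod W -> (forall x, W x -> U x) ->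
        (forall x, W x -> x = 0) \/ (forall x, U x -> W x)].

Definition simple_mod (M : lmodType L) : Prop := simple_sub (fun _ : M => True).

Definition dsum (M : lmodType L) (U V : M -> Prop) : Prop :=
  (forall x : M, exists u v, [/\ U u, V v & x = u + v]) /\
  (forall x : M, U x -> V x -> x = 0).

Definition indecomposable (M : lmodType L) : Prop :=
  (exists x : M, x <> 0) /\
  forall U V : M -> Prop, submod U -> submod V -> dsum U V ->
    (forall x, U x -> x = 0) \/ (forall x, V x -> x = 0).

Definition has_simple_summand (M : lmodType L) : Prop :=
  exists U V : M -> Prop, [/\ submod U, submod V, dsum U V & simple_sub U].

Definition mod_iso (M N : lmodType L) : Prop :=
  exists f : M -> N, lin f /\ bijective f.

Definition injective_mod (Q : lmodType L) : Prop :=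
  forall (M N : lmodType L) (f : M -> N) (g : M -> Q),
    lin f -> injective f -> lin g ->
    exists h : N -> Q, lin h /\ forall x, h (f x) = g x.

Definition left_ideal (I : L -> Prop) : Prop :=
  [/\ I 0, (forall x y, I x -> I y -> I (x + y)) & (forall a x, I x -> I (a * x))].

Definition maximal_left_ideal (I : L -> Prop) : Prop :=
  [/\ left_ideal I, ~ I 1 &
      forall J, left_ideal J -> (forall x, I x -> J x) ->
        (forall x, J x -> I x) \/ J 1].

Definition minimal_left_ideal (I : L -> Prop) : Prop :=
  [/\ left_ideal I, (exists x, I x /\ x <> 0) &
      forall J, left_ideal J -> (forall x, J x -> I x) ->
        (forall x, J x -> x = 0) \/ (forall x, I x -> J x)].

Definition jrad (x : L) : Prop := forall I, maximal_left_ideal I -> I x.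

(* rad^3 L = 0 : all products of three radical elements vanish
   (equivalently, the ideal they generate is zero) *)
Definition rad3_zero : Prop :=
  forall x y z, jrad x -> jrad y -> jrad z -> x * y * z = 0.

Definition soc (x : L) : Prop :=
  exists s : seq L, x = \sum_(y <- s) y /\
    forall y, y \in s -> exists I, minimal_left_ideal I /\ I y.

(* Lifts to L of the radical of A = L / Soc L : intersection of the maximal
   left ideals of L containing Soc L (these correspond to the maximal left
   ideals of A). *)
Definition radA (x : L) : Prop :=
  forall I, maximal_left_ideal I -> (forall s, soc s -> I s) -> I x.

(* A-modules (A = L / Soc L) are the L-modules annihilated by Soc L;
   mod A = finitely generated ones. *)
Definition modA (M : lmodType L) : Prop :=
  fingen M /\ forall (s : L) (x : M), soc s -> s *: x = 0.

Definition rA (M : lmodType L) (x : M) : Prop :=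
  exists s : seq (L * M), x = \sum_(p <- s) p.1 *: p.2 /\
    forall p, p \in s -> radA p.1.

Definition ses (C B S : lmodType L) (a : C -> B) (b : B -> S) : Prop :=
  [/\ lin a, lin b, injective a, (forall s, exists y, b y = s) &
      forall y, b y = 0 <-> exists c, y = a c].

(* Exactness of 0 -> F(C) -> F(B) -> F(S) -> 0, where
   F(X) = (X / r_A X, r_A X, f_X).  By the context, a sequence of H-modules is
   exact iff its U-components and V-components are exact; here:
   - U-components: 0 -> C/r_A C -> B/r_A B -> S/r_A S -> 0 (induced maps),
   - V-components: 0 -> r_A C -> r_A B -> r_A S -> 0 (restricted maps). *)
Definition F_seq_exact (C B S : lmodType L) (a : C -> B) (b : B -> S) : Prop :=
  [/\ forall c, rA (a c) -> rA c,
      forall y, rA (b y) <-> exists c, rA (y - a c) &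
      forall s, exists y, rA (s - b y)] /\
  [/\ (forall c, rA c -> rA (a c)) /\ (forall y, rA y -> rA (b y)),
      forall c, rA c -> a c = 0 -> c = 0,
      forall y, rA y -> (b y = 0 <-> exists c, rA c /\ a c = y) &
      forall s, rA s -> exists y, rA y /\ b y = s].

End ModuleNotions.

Definition artinian_ring (R : nzRingType) : Prop :=
  forall I : nat -> R -> Prop, (forall n, left_ideal (I n)) ->
    (forall n x, I n.+1 x -> I n x) ->
    exists n, forall m, (n <= m)%N -> forall x, I n x -> I m x.

Definition artin_algebra (L : nzRingType) : Prop :=
  exists (R : comNzRingType) (phi : R -> L),
  [/\ artinian_ring R, phi 1 = 1,
      (forall x y, phi (x + y) = phi x + phi y) /\
      (forall x y, phi (x * y) = phi x * phi y),
      (forall r a, phi r * a = a * phi r) &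
      exists s : seq L, forall x : L, exists c : seq R,
        x = \sum_(i < size s) phi c`_i * s`_i].

Definition selfinjective (L : nzRingType) : Prop := injective_mod L^o.

Definition inf_rep_type (L : nzRingType) : Prop :=
  exists M : nat -> lmodType L,
    (forall n, fingen (M n) /\ indecomposable (M n)) /\
    (forall m n, m <> n -> ~ mod_iso (M m) (M n)).

From mathcomp Require Import all_boot all_order all_algebra.
From Stdlib Require Import Classical ClassicalEpsilon.
From mathcomp Require Import zify.
Set Implicit Arguments. Unset Strict Implicit. Unset Printing Implicit Defensive.
Import GRing.Theory.
Local Open Scope ring_scope.

(* Since [S] is simple, [rad A] kills [S], so [r_A S = 0] and the only
   non-formal point is that [alpha c \in r_A B] forces [c \in r_A C].
   Write [B = L b0 + alpha C]; then [r_A B = rad A b0 + alpha (r_A C)], and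
   [rad A b0] is killed by [rad A], because the lift of [rad A] to [L] is
   [rad L + Soc L] and [rad^3 L = 0] puts [rad L * rad L] into [Soc L].
   Hence [c = c1 + d] with [c1 \in r_A C] and [d] killed by [rad A].  In a
   module without simple summands such a [d] is radical: otherwise some
   [a_i d] spans a simple submodule meeting [r_A C] trivially, and a
   complement built from simple generators splits it off.  The elements
   [a_i] (primitive idempotents modulo [rad L]) exist because the artin
   algebra [L] satisfies the descending chain condition on left ideals. *)

Lemma not_all_imply (T : Type) (P Q : T -> Prop) :
  ~ (forall x, P x -> Q x) -> exists2 x, P x & ~ Q x.
Proof.
move=> nPQ; apply: NNPP => nex; apply: nPQ => x Px.
by apply: NNPP => nQx; apply: nex; exists x.
Qed.

Section Submodules.
Variables (L : nzRingType) (M : lmodType L).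
Implicit Types (P Q N E : M -> Prop) (x y t : M).

Lemma submod0 P : submod P -> P 0. Proof. by case. Qed.

Lemma submodD P x y : submod P -> P x -> P y -> P (x + y).
Proof. by case=> _ H Px Py; have := H 1 x y Px Py; rewrite scale1r. Qed.

Lemma submodZ P a x : submod P -> P x -> P (a *: x).
Proof. by move=> [H0 H] Px; have := H a x 0 Px H0; rewrite addr0. Qed.

Lemma submodB P x y : submod P -> P x -> P y -> P (x - y).
Proof. by move=> sP Px Py; rewrite -scaleN1r; apply: submodD => //; apply: submodZ. Qed.

Lemma submod_sum P (I : Type) (r : seq I) (B : pred I) (F : I -> M) :
  submod P -> (forall i, B i -> P (F i)) -> P (\sum_(i <- r | B i) F i).
Proof.
move=> sP PF; apply: (big_ind P) => //; first exact: submod0.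
by move=> x y; apply: submodD.
Qed.

Definition addsm P Q x := exists p q, [/\ P p, Q q & x = p + q].

Definition cycsm t x := exists l : L, x = l *: t.

Fixpoint spansm (ts : seq M) : M -> Prop :=
  if ts is t :: ts' then fun x => exists l y, spansm ts' y /\ x = l *: t + y
  else fun x => x = 0.

Lemma submod_addsm P Q : submod P -> submod Q -> submod (addsm P Q).
Proof.
move=> sP sQ; split; first by exists 0, 0; rewrite addr0; split => //; apply: submod0.
move=> a _ _ [p [q [Pp Qq ->]]] [p' [q' [Pp' Qq' ->]]].
exists (a *: p + p'), (a *: q + q'); split; try by apply: submodD => //; apply: submodZ.
by rewrite scalerDr addrACA.
Qed.

Lemma submod_cycsm t : submod (cycsm t).
Proof.
split; first by exists 0; rewrite scale0r.
by move=> a _ _ [l ->] [l' ->]; exists (a * l + l'); rewrite scalerDl scalerA.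
Qed.

Lemma submod_spansm ts : submod (spansm ts).
Proof.
elim: ts => [|t ts IH] /=; first by split=> // a _ _ -> ->; rewrite scaler0 addr0.
split; first by exists 0, 0; rewrite scale0r addr0; split => //; apply: submod0.
move=> a _ _ [l [u [Hu ->]]] [l' [u' [Hu' ->]]].
exists (a * l + l'), (a *: u + u'); split; first by apply: submodD => //; apply: submodZ.
by rewrite scalerDr scalerDl scalerA addrACA.
Qed.

Lemma addsml P Q x : submod Q -> P x -> addsm P Q x.
Proof. by move=> sQ Px; exists x, 0; rewrite addr0; split => //; apply: submod0. Qed.

Lemma addsmr P Q x : submod P -> Q x -> addsm P Q x.
Proof. by move=> sP Qx; exists 0, x; rewrite add0r; split => //; apply: submod0. Qed.

Lemma submodI P Q : submod P -> submod Q -> submod (fun x => P x /\ Q x).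
Proof.
move=> sP sQ; split=> [|b u v [Pu Qu] [Pv Qv]]; first by split; apply: submod0.
by split; apply: submodD => //; apply: submodZ.
Qed.

Lemma cycsm_id t : cycsm t t. Proof. by exists 1; rewrite scale1r. Qed.

Lemma spansm_mem ts t : t \in ts -> spansm ts t.
Proof.
elim: ts => [|s ts IH] //=; rewrite inE => /orP [/eqP ->|/IH Ht].
  by exists 1, 0; rewrite scale1r addr0; split => //; apply: submod0 (submod_spansm ts).
by exists 0, t; rewrite scale0r add0r.
Qed.

(* [t] is simple over [N]: the cyclic module [L t] is, modulo [N], a quotient
   of the simple module [L / K]. *)
Definition simple_over N t :=
  exists K, maximal_left_ideal K /\ forall l, K l -> N (l *: t).

Lemma simple_overP N E t l : submod E -> (forall x, N x -> E x) ->
  simple_over N t -> E (l *: t) -> N (l *: t) \/ E t.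
Proof.
move=> sE NE [K [[_ _ Kmax] KN]] El.
pose T := fun k : L => E (k *: t).
have lT : left_ideal T.
  split; rewrite /T; first by rewrite scale0r; apply: submod0.
    by move=> k k' Ek Ek'; rewrite scalerDl; apply: submodD.
  by move=> a k Ek; rewrite -scalerA; apply: submodZ.
have [TK|T1] := Kmax T lT (fun k Kk => NE _ (KN k Kk)); first by left; apply/KN/TK.
by right; move: T1; rewrite /T scale1r.
Qed.

Lemma cycsm_simple K y : maximal_left_ideal K -> (forall l, K l -> l *: y = 0) ->
  forall W, submod W -> (forall x, W x -> cycsm y x) ->
    (forall x, W x -> x = 0) \/ (forall x, cycsm y x -> W x).
Proof.
move=> Kmax Ky W sW Wy; have [Wy1|nWy1] := classic (W y).
  by right => _ [l ->]; apply: submodZ.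
left => _ /[dup] /Wy [l ->] Wly.
have simple_y : simple_over (fun x => x = 0) y by exists K.
have W0 x : x = 0 -> W x by move=> ->; apply: submod0.
by have [|//] := simple_overP sW W0 simple_y Wly.
Qed.

(* Add the generators one at a time: a generator already in [P + Q] is
   skipped, otherwise [L t] is added to [Q]; simplicity over [N] keeps
   [P ∩ Q] inside [N]. *)
Lemma complement_span N P ts :
  submod N -> submod P -> (forall x, N x -> P x) ->
  (forall t, t \in ts -> simple_over N t) ->
  exists Q, [/\ submod Q, (forall x, N x -> Q x),
    (forall x, P x -> Q x -> N x) & forall x, spansm ts x -> addsm P Q x].
Proof.
move=> sN sP NP; elim: ts => [|t ts IH] simple_ts.
  by exists N; split => // _ ->; exists 0, 0; rewrite addr0; split => //; apply: submod0.
have [|Q [sQ NQ PQ spanQ]] := IH; first by move=> s Hs; apply: simple_ts; rewrite inE Hs orbT.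
have sPQ := submod_addsm sP sQ.
have [PQt|PQt] := classic (addsm P Q t).
  exists Q; split => // _ /= [l [u [Hu ->]]].
  by apply: submodD => //; [apply: submodZ | apply: spanQ].
exists (addsm Q (cycsm t)); split.
- exact: submod_addsm (submod_cycsm t).
- by move=> x Nx; apply: addsml (submod_cycsm t) _; apply: NQ.
- move=> x Px [q [_ [Qq [l ->] Ex]]].
  have PQl : addsm P Q (l *: t).
    have -> : l *: t = x - q by rewrite Ex addrC addKr.
    by apply: submodB => //; [apply: addsml | apply: addsmr].
  have simple_t : simple_over N t by apply: simple_ts; rewrite inE eqxx.
  have [Nl|//] := simple_overP sPQ (fun x Nx => addsmr sP (NQ x Nx)) simple_t PQl.
  by apply: PQ => //; rewrite Ex; apply: submodD => //; apply: NQ.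
- move=> _ /= [l [u [Hu ->]]]; have [p [q [Pp Qq ->]]] := spanQ u Hu.
  exists p, (q + l *: t); split => //; last by rewrite addrC -addrA.
  by exists q, (l *: t); split; [|exists l|].
Qed.

Lemma complement_over N P ts :
  submod N -> submod P -> (forall x, N x -> P x) ->
  (forall t, t \in ts -> simple_over N t) -> (forall x, addsm N (spansm ts) x) ->
  exists Q, [/\ submod Q, (forall x, N x -> Q x),
    (forall x, P x -> Q x -> N x) & forall x, addsm P Q x].
Proof.
move=> sN sP NP simple_ts gen.
have [Q [sQ NQ PQ spanQ]] := complement_span sN sP NP simple_ts.
exists Q; split => // x; have [u [v [Nu /spanQ [p [q [Pp Qq ->]]] ->]]] := gen x.
by exists (u + p), q; split; [apply: submodD => //; apply: NP | | rewrite addrA].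
Qed.

End Submodules.

Section LeftIdeals.
Variable L : nzRingType.
Implicit Types (I J K m : L -> Prop) (x y z : L).

Lemma lideal_submod I : left_ideal I -> submod (M := L^o) I.
Proof. by case=> I0 ID IM; split => // a x y Ix Iy; apply: ID (IM _ _ Ix) Iy. Qed.

Lemma submod_lideal I : submod (M := L^o) I -> left_ideal I.
Proof.
move=> sI; split; first exact: submod0 sI.
  by move=> x y; apply: (submodD (M := L^o)).
by move=> a x; apply: (submodZ (M := L^o)).
Qed.

Lemma lideal0 I : left_ideal I -> I 0. Proof. by case. Qed.

Lemma lidealD I x y : left_ideal I -> I x -> I y -> I (x + y).
Proof. by case=> _ ID _; apply: ID. Qed.

Lemma lidealM I a x : left_ideal I -> I x -> I (a * x).
Proof. by case=> _ _ IM; apply: IM. Qed.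

Lemma lidealB I x y : left_ideal I -> I x -> I y -> I (x - y).
Proof. by move=> lI Ix Iy; rewrite -mulN1r; apply: lidealD lI Ix (lidealM _ lI Iy). Qed.

Lemma lideal_sum I (J : Type) (r : seq J) (Q : pred J) (F : J -> L) :
  left_ideal I -> (forall i, Q i -> I (F i)) -> I (\sum_(i <- r | Q i) F i).
Proof.
move=> lI IF; apply: big_ind => //; first exact: lideal0 lI.
by move=> x y Ix Iy; exact: (lidealD lI Ix Iy).
Qed.

Lemma maximal_lideal_gen m u z : maximal_left_ideal m -> ~ m u ->
  exists t v, m v /\ z = t * u + v.
Proof.
move=> [lm m1 mmax] mu.
pose J z := exists t v, m v /\ z = t * u + v.
have lJ : left_ideal J.
  split; first by exists 0, 0; rewrite mul0r addr0; split => //; apply: lideal0.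
    move=> _ _ [t [v [mv ->]]] [t' [v' [mv' ->]]].
    by exists (t + t'), (v + v'); split; [apply: lidealD | rewrite mulrDl addrACA].
  move=> a _ [t [v [mv ->]]]; exists (a * t), (a * v).
  by split; [apply: lidealM | rewrite mulrDr mulrA].
have mJ x : m x -> J x by exists 0, x; rewrite mul0r add0r.
have [Jm|J1] := mmax J lJ mJ.
  by case: mu; apply: Jm; exists 1, 0; rewrite mul1r addr0; split => //; apply: lideal0.
by have := lidealM z lJ J1; rewrite mulr1.
Qed.

(* [m : x] is the annihilator of the image of [x] in the simple module [L / m]. *)
Lemma maximal_lideal_colon m x : maximal_left_ideal m -> ~ m x ->
  maximal_left_ideal (fun l => m (l * x)).
Proof.
move=> mm mx; have [lm _ _] := mm.
split; last first.
- move=> J lJ mJ; have [Jm|] := classic (forall l, J l -> m (l * x)); first by left.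
  move=> /not_all_imply [l Jl ml]; right.
  have [t [v [mv e]]] := maximal_lideal_gen x mm ml.
  have mx1 : m ((1 - t * l) * x) by rewrite mulrBl mul1r -mulrA {1}e addrC addKr.
  by rewrite -(subrK (t * l) 1); apply: lidealD (mJ _ mx1) (lidealM _ lJ Jl).
- by rewrite mul1r.
- split; first by rewrite mul0r; apply: lideal0.
    by move=> a b Ha Hb; rewrite mulrDl; apply: lidealD.
  by move=> a b Hb; rewrite -mulrA; apply: lidealM.
Qed.

Lemma lideal_jrad : left_ideal (@jrad L).
Proof.
split; first by move=> I [lI _ _]; exact: lideal0 lI.
  by move=> x y Hx Hy I mI; have [lI _ _] := mI; apply: lidealD (Hx _ mI) (Hy _ mI).
by move=> a x Hx I mI; have [lI _ _] := mI; apply: lidealM (Hx _ mI).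
Qed.

Lemma lideal_radA : left_ideal (@radA L).
Proof.
split; first by move=> I [lI _ _] _; exact: lideal0 lI.
  by move=> x y Hx Hy I mI sI; have [lI _ _] := mI; apply: lidealD (Hx _ mI sI) (Hy _ mI sI).
by move=> a x Hx I mI sI; have [lI _ _] := mI; apply: lidealM (Hx _ mI sI).
Qed.

Lemma jradMr j x : jrad j -> jrad (j * x).
Proof.
move=> Hj m mm; have [mx|mx] := classic (m x); first by have [lm _ _] := mm; apply: lidealM.
exact: Hj _ (maximal_lideal_colon mm mx).
Qed.

Lemma jrad_radA x : jrad x -> radA x.
Proof. by move=> Hx I mI _; apply: Hx. Qed.

Lemma soc0 : soc (0 : L). Proof. by exists [::]; rewrite big_nil. Qed.

Lemma socD x y : soc x -> soc y -> soc (x + y).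
Proof.
move=> [s [-> Hs]] [s' [-> Hs']]; exists (s ++ s'); rewrite big_cat; split => // z.
by rewrite mem_cat => /orP [/Hs|/Hs'].
Qed.

Lemma socM a x : soc x -> soc (a * x).
Proof.
move=> [s [-> Hs]]; exists [seq a * y | y <- s]; rewrite big_map mulr_sumr.
split => // _ /mapP [y /Hs [I [mI Iy]] ->]; exists I; split => //.
by have [lI _ _] := mI; apply: lidealM.
Qed.

Lemma soc_minimal I y : minimal_left_ideal I -> I y -> soc y.
Proof.
by move=> mI Iy; exists [:: y]; rewrite big_seq1; split => // z; rewrite inE => /eqP ->; exists I.
Qed.

End LeftIdeals.

Section LinearMaps.
Variables (L : nzRingType) (M N : lmodType L) (f : M -> N).
Hypothesis lf : lin f.

Lemma lin0 : f 0 = 0.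
Proof. by apply: (addrI (f 0)); have := lf 1 0 0; rewrite !scale1r !addr0 => <-. Qed.

Lemma linD x y : f (x + y) = f x + f y.
Proof. by have := lf 1 x y; rewrite !scale1r. Qed.

Lemma linZ a x : f (a *: x) = a *: f x.
Proof. by have := lf a x 0; rewrite !addr0 lin0 addr0. Qed.

Lemma linB x y : f (x - y) = f x - f y.
Proof. by rewrite -!scaleN1r linD linZ. Qed.

Lemma lin_rA x : rA x -> rA (f x).
Proof.
move=> [s [-> Hs]]; exists [seq (p.1, f p.2) | p <- s]; split; last first.
  by move=> _ /mapP [q /Hs Hq ->].
rewrite big_map; elim: s {Hs} => [|p s IH]; first by rewrite !big_nil lin0.
by rewrite !big_cons linD linZ IH.
Qed.

End LinearMaps.

Section RadicalSubmodule.
Variables (L : nzRingType) (M : lmodType L).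

Lemma submod_rA : submod (@rA L M).
Proof.
split; first by exists [::]; rewrite big_nil.
move=> b x y [s [-> Hs]] [s' [-> Hs']].
exists ([seq (b * p.1, p.2) | p <- s] ++ s'); split.
  rewrite big_cat big_map scaler_sumr; congr (_ + _).
  by apply: eq_bigr => p _; rewrite scalerA.
move=> p; rewrite mem_cat => /orP [/mapP [q /Hs Hq ->]|/Hs'] //=.
by have [_ _ rM] := @lideal_radA L; apply: rM.
Qed.

Lemma rA_scale (j : L) (x : M) : radA j -> rA (j *: x).
Proof.
by move=> Hj; exists [:: (j, x)]; rewrite big_seq1; split => // p; rewrite inE => /eqP ->.
Qed.

End RadicalSubmodule.

Definition stabilizes (T : Type) (P : nat -> T -> Prop) :=
  exists n, forall m, (n <= m)%N -> forall x, P n x -> P m x.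

Lemma chain_le (T : Type) (P : nat -> T -> Prop) : (forall n x, P n.+1 x -> P n x) ->
  forall n m x, (n <= m)%N -> P m x -> P n x.
Proof.
move=> Pdec n m x /subnKC <-; elim: (m - n)%N => [|k IH]; first by rewrite addn0.
by rewrite addnS => /Pdec /IH.
Qed.

Section ArtinDCC.
Variables (L : nzRingType) (R : comNzRingType) (phi : R -> L).
Hypotheses (artR : artinian_ring R) (phi1 : phi 1 = 1)
  (phiD : forall r s, phi (r + s) = phi r + phi s)
  (phiM : forall r s, phi (r * s) = phi r * phi s).

Lemma phi0 : phi 0 = 0.
Proof. by apply: (addrI (phi 0)); rewrite addr0 -phiD addr0. Qed.

Lemma phiN r : phi (- r) = - phi r.
Proof. by apply: (addrI (phi r)); rewrite -phiD !subrr phi0. Qed.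

Definition Rsubmod (P : L -> Prop) := [/\ P 0, (forall x y, P x -> P y -> P (x + y)) &
  (forall r x, P x -> P (phi r * x))].

Lemma RsubmodB P x y : Rsubmod P -> P x -> P y -> P (x - y).
Proof.
move=> [_ PD PM] Px Py; apply: PD => //.
by rewrite -mulN1r -phi1 -phiN; apply: PM.
Qed.

Lemma lideal_Rsubmod I : left_ideal I -> Rsubmod I.
Proof.
by move=> lI; split=> [|x y|r x]; [exact: lideal0 lI | exact: lidealD lI | exact: lidealM lI].
Qed.

Fixpoint Rspan (gs : seq L) : L -> Prop :=
  if gs is g :: gs' then fun x => exists r y, Rspan gs' y /\ x = phi r * g + y
  else fun x => x = 0.

Lemma Rsubmod_span gs : Rsubmod (Rspan gs).
Proof.
elim: gs => [|g gs [S0 SD SM]] /=.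
  by split => // [x y -> ->|r x ->]; rewrite ?addr0 ?mulr0.
split; first by exists 0, 0; rewrite phi0 mul0r addr0.
  move=> _ _ [r [y [Hy ->]]] [r' [y' [Hy' ->]]]; exists (r + r'), (y + y').
  by split; [apply: SD | rewrite phiD mulrDl addrACA].
move=> a _ [r [y [Hy ->]]]; exists (a * r), (phi a * y).
by split; [apply: SM | rewrite mulrDr phiM mulrA].
Qed.

(* Induction on the generators: a chain in [R g + Rspan gs] stabilizes once
   both the chain of leading coefficients (an ideal chain of [R]) and its
   trace on [Rspan gs] do. *)
Lemma Rspan_dcc gs (P : nat -> L -> Prop) : (forall n, Rsubmod (P n)) ->
  (forall n x, P n.+1 x -> P n x) -> (forall n x, P n x -> Rspan gs x) ->
  stabilizes P.
Proof.
elim: gs P => [|g gs IH] P sP Pdec Pspan.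
  by exists 0%N => m _ x /Pspan /= ->; case: (sP m).
pose I n (r : R) := exists y, Rspan gs y /\ P n (phi r * g + y).
pose Q n x := P n x /\ Rspan gs x.
have [S0 SD SM] := Rsubmod_span gs.
have lI n : left_ideal (I n).
  have [P0 PD PM] := sP n; split; first by exists 0; rewrite phi0 mul0r addr0.
    move=> r r' [y [Hy Py]] [y' [Hy' Py']]; exists (y + y').
    by split; [apply: SD | rewrite phiD mulrDl addrACA; apply: PD].
  move=> a r [y [Hy Py]]; exists (phi a * y).
  by split; [apply: SM | rewrite phiM -mulrA -mulrDr; apply: PM].
have Idec n r : I n.+1 r -> I n r by move=> [y [Hy Py]]; exists y; split => //; apply: Pdec.
have Qdec n x : Q n.+1 x -> Q n x by move=> [Px Sx]; split => //; apply: Pdec.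
have [N1 HN1] := artR lI Idec.
have [N2 HN2] : stabilizes Q.
  apply: IH => [n||n x []//]; last exact: Qdec.
  have [P0 PD PM] := sP n; split => [|x y [? ?] [? ?]|r x [? ?]]; split; by eauto.
exists (maxn N1 N2) => m Hm x Px.
have [le1 le2] : (N1 <= m)%N /\ (N2 <= m)%N.
  by split; apply: leq_trans Hm; rewrite ?leq_maxl ?leq_maxr.
have /= [r [y [Hy ex]]] := Pspan _ _ Px.
have IN1 : I N1 r by apply: (chain_le Idec (leq_maxl N1 N2)); exists y; rewrite -ex.
have [y' [Hy' Pm]] := HN1 m le1 r IN1.
have Pm' : P (maxn N1 N2) (phi r * g + y') := chain_le Pdec Hm Pm.
have Qd : Q N2 (y - y').
  apply: (chain_le Qdec (leq_maxr N1 N2)).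
  split; last exact: RsubmodB (Rsubmod_span gs) Hy Hy'.
  have -> : y - y' = x - (phi r * g + y') by rewrite ex opprD addrACA subrr add0r.
  exact: RsubmodB.
have [Qm _] := HN2 m le2 _ Qd.
have -> : x = (phi r * g + y') + (y - y') by rewrite ex -addrA (addrC y') subrK.
by have [_ PD _] := sP m; apply: PD.
Qed.

End ArtinDCC.

Lemma artin_dcc (L : nzRingType) (I : nat -> L -> Prop) : artin_algebra L ->
  (forall n, left_ideal (I n)) -> (forall n x, I n.+1 x -> I n x) -> stabilizes I.
Proof.
move=> [R [phi [artR phi1 [phiD phiM] _ [s Hs]]]] lI Idec.
apply: (Rspan_dcc artR phi1 phiD phiM (gs := s)) => // [n|n x _].
  exact: lideal_Rsubmod.
have [c ->] := Hs x; elim: s c {Hs} => [|g gs IH] c /=; first by rewrite big_ord0.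
rewrite big_ord_recl /=; exists c`_0, (\sum_(i < size gs) phi (behead c)`_i * gs`_i).
by split; [apply: IH | congr (_ + _); apply: eq_bigr => i _; rewrite nth_behead].
Qed.

Section RadicalCover.
Variable L : nzRingType.
Implicit Types (P : L -> Prop) (m : nat -> L -> Prop).

Definition maximal_family n m := forall i, (i < n)%N -> maximal_left_ideal (m i).

Definition fin_meet P := exists n m,
  maximal_family n m /\ forall x, P x <-> (forall i, (i < n)%N -> m i x).

Definition rad_cover n m :=
  maximal_family n m /\ forall x, (forall i, (i < n)%N -> m i x) -> jrad x.

Definition irredundant n m := forall i, (i < n)%N ->
  exists w, (forall j, (j < n)%N -> j <> i -> m j w) /\ ~ m i w.

Lemma lideal_fin_meet P : fin_meet P -> left_ideal P.
Proof.
move=> [n [m [mmax HP]]]; have lm i : (i < n)%N -> left_ideal (m i) by move=> /mmax [].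
split; first by apply/HP => i Hi; exact: lideal0 (lm i Hi).
  move=> x y /HP Hx /HP Hy; apply/HP => i Hi.
  exact: lidealD (lm i Hi) (Hx i Hi) (Hy i Hi).
by move=> a x /HP Hx; apply/HP => i Hi; exact: (lidealM a (lm i Hi) (Hx i Hi)).
Qed.

Lemma fin_meetI P K : fin_meet P -> maximal_left_ideal K -> fin_meet (fun x => P x /\ K x).
Proof.
move=> [n [m [mmax HP]]] Kmax.
exists n.+1, (fun i => if (i < n)%N then m i else K); split.
  by move=> i Hi; case: ifP => // ?; apply: mmax.
move=> x; split=> [[/HP Px Kx] i Hi|Hx]; first by case: ifP => // ?; apply: Px.
split; last by have := Hx n (ltnSn n); rewrite ltnn.
by apply/HP => i Hi; have := Hx i (ltnW (leq_trans Hi (leqnn _))); rewrite Hi.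
Qed.

(* If not, every finite meet of maximal left ideals avoids some maximal left
   ideal, and intersecting with it forever gives a strictly decreasing chain. *)
Lemma artin_rad_cover : artin_algebra L -> exists n m, rad_cover n m.
Proof.
move=> hart; apply: NNPP => no_cover.
have escape P : exists K, fin_meet P -> maximal_left_ideal K /\ ~ (forall x, P x -> K x).
  have [[n [m [mmax HP]]]|] := classic (fin_meet P); last by exists P.
  have [x mx /not_all_imply [K Kmax Kx]] :
      exists2 x, (forall i, (i < n)%N -> m i x) & ~ jrad x.
    by apply: not_all_imply => cover; apply: no_cover; exists n, m.
  by exists K => _; split => // PK; apply/Kx/PK/HP.
have [g Hg] := choice _ escape.
pose fix chain k : L -> Prop :=
  if k is k'.+1 then fun x => chain k' x /\ g (chain k') x else fun _ => True.
have fin_chain k : fin_meet (chain k).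
  elim: k => [|k IH]; first by exists 0%N, (fun _ _ => True).
  exact: fin_meetI IH (Hg _ IH).1.
have [N HN] := artin_dcc hart (fun k => lideal_fin_meet (fin_chain k))
  (fun k x (Hx : chain k.+1 x) => Hx.1).
by apply: (Hg _ (fin_chain N)).2 => x /(HN N.+1 (leqnSn N)) [].
Qed.

Lemma rad_cover_irredundant n m : rad_cover n m ->
  exists n' m', rad_cover n' m' /\ irredundant n' m'.
Proof.
elim: n m => [|n IH] m cover; first by exists 0%N, m; split => // i.
have [irr|] := classic (irredundant n.+1 m); first by exists n.+1, m.
move=> /not_all_imply [i lt_i red].
have mi w : (forall j, (j < n.+1)%N -> j <> i -> m j w) -> m i w.
  by move=> Hw; apply: NNPP => nw; apply: red; exists w.
have [mmax mrad] := cover.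
apply: (IH (fun j => m (bump i j))); split=> [j lt_j|x Hx].
  by apply: mmax; rewrite /bump; case: leqP; lia.
apply: mrad; suff mx j : (j < n.+1)%N -> j <> i -> m j x.
  by move=> j lt_j; have [->|] := eqVneq j i; [apply: mi | move/eqP; apply: mx].
move=> lt_j /eqP ne_ji; have -> : j = bump i (unbump i j) by rewrite unbumpK // inE.
by apply: Hx; rewrite /unbump; case: ltnP; lia.
Qed.

(* The [a i] play the role of a complete set of primitive idempotents
   modulo the radical. *)
Definition local_family n (a : nat -> L) (K : nat -> L -> Prop) :=
  [/\ maximal_family n K, forall i l, (i < n)%N -> K i l -> jrad (l * a i) &
      jrad (1 - \sum_(i < n) a i)].

Lemma irredundant_separators n m : rad_cover n m -> irredundant n m ->
  exists a : nat -> L, forall i, (i < n)%N ->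
    (forall j, (j < n)%N -> j <> i -> m j (a i)) /\ m i (1 - a i).
Proof.
move=> [mmax _] irr.
suff /(choice _) [a Ha] : forall i, exists ai : L, (i < n)%N ->
    (forall j, (j < n)%N -> j <> i -> m j ai) /\ m i (1 - ai) by exists a.
move=> i; have [lt_i|le_ni] := ltnP i n; last by exists 0.
have [w [mw nw]] := irr i lt_i.
have [t [v [mv e]]] := maximal_lideal_gen 1 (mmax i lt_i) nw.
exists (t * w) => _; split; last by rewrite e addrC addKr.
move=> j lt_j ne_ji; have [lm _ _] := mmax j lt_j.
exact: (lidealM t lm (mw j lt_j ne_ji)).
Qed.

Lemma artin_local_family : artin_algebra L -> exists n a K, local_family n a K.
Proof.
move=> /artin_rad_cover [n0 [m0 /rad_cover_irredundant [n [m [cover irr]]]]].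
have [mmax mrad] := cover; have [a Ha] := irredundant_separators cover irr.
have lm i : (i < n)%N -> left_ideal (m i) by move=> /mmax [].
exists n, a, (fun i l => m i (l * a i)); split.
- move=> i lt_i; apply: maximal_lideal_colon (mmax i lt_i) _ => mai.
  have [_ m1 _] := mmax i lt_i; apply: m1.
  by rewrite -(subrK (a i) 1); apply: lidealD (lm i lt_i) (Ha i lt_i).2 mai.
- move=> i l lt_i mla; apply: mrad => j lt_j; have [->//|ne_ji] := eqVneq j i.
  by apply: lidealM (lm j lt_j) ((Ha i lt_i).1 j lt_j _); apply/eqP.
apply: mrad => k lt_k; rewrite (bigD1 (Ordinal lt_k)) //= opprD addrA.
apply: lidealB (lm k lt_k) (Ha k lt_k).2 _; apply: lideal_sum (lm k lt_k) _ => i ne_ik.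
apply: ((Ha i (ltn_ord i)).1 k lt_k) => eq_ki; move: ne_ik.
by rewrite -(inj_eq val_inj) /= eq_ki eqxx.
Qed.

End RadicalCover.

Section Socle.
Variable L : nzRingType.

Lemma submod_soc : submod (M := L^o) (@soc L).
Proof. by split=> [|b x y Sx Sy]; [exact: soc0 | exact: socD (socM b Sx) Sy]. Qed.

Lemma minimal_cyclic_lideal K (y : L) : maximal_left_ideal K ->
  (forall l, K l -> l * y = 0) -> y <> 0 -> minimal_left_ideal (cycsm (y : L^o)).
Proof.
move=> Kmax Ky y0; split.
- exact/submod_lideal/submod_cycsm.
- by exists y; split => //; apply: cycsm_id.
move=> J /lideal_submod sJ Jy; exact: (cycsm_simple (M := L^o) Kmax Ky sJ Jy).
Qed.

Definition jrad_soc (x : L) := exists j s, [/\ jrad j, soc s & x = j + s].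

Lemma submod_jrad_soc : submod (M := L^o) jrad_soc.
Proof.
have [j0 jD jM] := @lideal_jrad L.
split; first by exists 0, 0; rewrite addr0; split => //; exact: soc0.
move=> b _ _ [j [s [Hj Hs ->]]] [j' [s' [Hj' Hs' ->]]].
exists (b * j + j'), (b * s + s').
split; [exact: jD (jM b j Hj) Hj' | exact: socD (socM b Hs) Hs' |].
by change (b * (j + s) + (j' + s') = b * j + j' + (b * s + s')); rewrite mulrDr addrACA.
Qed.

Lemma jrad_soc_jrad x : jrad x -> jrad_soc x.
Proof. by exists x, 0; rewrite addr0; split => //; exact: soc0. Qed.

Lemma jrad_soc_soc x : soc x -> jrad_soc x.
Proof. by exists 0, x; rewrite add0r; split => //; exact: lideal0 (@lideal_jrad L). Qed.

(* A complement [Q] of [N + L t] over [N] covering [L] is a maximal left ideal: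
   any strictly larger left ideal meets [L t] outside [N], hence contains [t]. *)
Lemma complement_maximal (N Q : L^o -> Prop) (t : L^o) :
  submod N -> submod Q -> simple_over N t -> ~ N t ->
  (forall x, N x -> Q x) ->
  (forall x, addsm N (cycsm t) x -> Q x -> N x) ->
  (forall x, addsm (addsm N (cycsm t)) Q x) ->
  maximal_left_ideal Q /\ ~ Q t.
Proof.
move=> sN sQ simple_t nNt NQ PQN cover; have lQ := submod_lideal sQ.
have nQt : ~ Q t by move=> Qt; apply/nNt/PQN/Qt/addsmr/cycsm_id.
split => //; split => // [Q1|J lJ QJ].
  by apply: nQt; rewrite -[t]mulr1; apply: lidealM.
have cover_J x : J t -> J x.
  move=> Jt; have [_ [q [[u [_ [Nu [l ->] ->]]] Qq ->]]] := cover x.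
  apply: (lidealD lJ _ (QJ _ Qq)).
  exact: (lidealD lJ (QJ _ (NQ _ Nu)) (lidealM _ lJ Jt)).
have [Jt|nJt] := classic (J t); [right; exact: cover_J | left => x].
have sJ := lideal_submod lJ.
have [_ [q [[u [v [Nu [l El] ->]]] Qq ->]]] := cover x => Jx.
have Jv : J v.
  have -> : v = u + v + q - q - u by rewrite addrK addrC addKr.
  exact: (submodB sJ (submodB sJ Jx (QJ _ Qq)) (QJ _ (NQ _ Nu))).
rewrite El in Jv *.
have [Nv|//] := simple_overP sJ (fun y Ny => QJ _ (NQ _ Ny)) simple_t Jv.
exact: (submodD sQ (submodD sQ (NQ _ Nu) (NQ _ Nv)) Qq).
Qed.

End Socle.

Section LocalFamily.
Variables (L : nzRingType) (n : nat) (a : nat -> L) (K : nat -> L -> Prop).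
Hypothesis fam : local_family n a K.

Lemma local_family_mem (M : lmodType L) (N : M -> Prop) x : submod N ->
  N ((1 - \sum_(i < n) a i) *: x) -> (forall i, (i < n)%N -> N (a i *: x)) -> N x.
Proof.
move=> sN N1 Na; rewrite -[x]scale1r -[1](subrK (\sum_(i < n) a i)) scalerDl.
by rewrite scaler_suml; apply: (submodD sN N1); apply: submod_sum => // i _; apply: Na.
Qed.

Lemma local_family_escape (M : lmodType L) (N : M -> Prop) x : submod N ->
  N ((1 - \sum_(i < n) a i) *: x) -> ~ N x -> exists2 i, (i < n)%N & ~ N (a i *: x).
Proof.
move=> sN N1 nNx; apply: NNPP => nex; apply/nNx/(local_family_mem sN N1) => i lt_i.
by apply: NNPP => nNi; apply: nex; exists i.
Qed.

Lemma simple_over_family (M : lmodType L) (N : M -> Prop) g i : (i < n)%N ->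
  (forall j y, jrad j -> N (j *: y)) -> simple_over N (a i *: g).
Proof.
move=> lt_i NJ; have [Kmax Kjrad _] := fam.
exists (K i); split => [|l Kl]; first exact: Kmax.
by rewrite scalerA; exact: (NJ _ _ (Kjrad i l lt_i Kl)).
Qed.

(* Over a submodule containing [rad L M], the elements [a k g], for [g] among
   generators of [M], are simple generators of [M]. *)
Lemma complement_family (M : lmodType L) (gs : seq M) (N P : M -> Prop) :
  (forall x, exists c : seq L, x = \sum_(i < size gs) c`_i *: gs`_i) ->
  submod N -> submod P -> (forall x, N x -> P x) ->
  (forall j y, jrad j -> N (j *: y)) ->
  exists Q, [/\ submod Q, (forall x, N x -> Q x),
    (forall x, P x -> Q x -> N x) & forall x, addsm P Q x].
Proof.
move=> gen sN sP NP NJ; have [_ _ jrad1] := fam.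
pose ts := flatten [seq [seq a k *: g | k <- iota 0 n] | g <- gs].
have sNts := submod_addsm sN (submod_spansm ts).
apply: (complement_over (ts := ts)) => // [t|x].
  move=> /flatten_mapP [g _ /mapP [k]]; rewrite mem_iota add0n => /andP [_ lt_k] ->.
  exact: simple_over_family.
have [c ->] := gen x; apply: submod_sum => // j _; apply: (submodZ _ sNts).
apply: (local_family_mem sNts); first exact: (addsml (submod_spansm ts) (NJ _ _ jrad1)).
move=> k lt_k; apply/addsmr/spansm_mem/flatten_mapP => //.
exists gs`_j; first exact: mem_nth.
by apply/mapP; exists k; rewrite // mem_iota add0n.
Qed.

Lemma jrad_ann_soc (x : L) : (forall j, jrad j -> j * x = 0) -> soc x.
Proof.
move=> Jx; have [Kmax Kjrad jrad1] := fam.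
apply: (local_family_mem (M := L^o) (@submod_soc L)) => [|i lt_i].
  by rewrite /GRing.scale /= Jx //; exact: soc0.
change (soc (a i * x)); have [->|/eqP nz] := eqVneq (a i * x) 0; first exact: soc0.
have Ky l : K i l -> l * (a i * x) = 0 by move=> Kl; rewrite mulrA Jx //; apply: Kjrad.
exact: (soc_minimal (minimal_cyclic_lideal (Kmax i lt_i) Ky nz) (cycsm_id _)).
Qed.

Lemma radA_jrad_soc (x : L) : radA x -> jrad_soc x.
Proof.
move=> Hx; apply: NNPP => nx; have [_ _ jrad1] := fam.
have NJ j (y : L^o) : jrad j -> jrad_soc (j *: y).
  by move=> Hj; exact: (jrad_soc_jrad (jradMr y Hj)).
have [i lt_i nt] := local_family_escape (submod_jrad_soc L) (NJ _ x jrad1) nx.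
have gen (y : L^o) :
    exists c : seq L, y = \sum_(k < size [:: 1 : L^o]) c`_k *: [:: 1 : L^o]`_k.
  by exists [:: y]; rewrite big_ord1 /= [RHS]mulr1.
have sP := submod_addsm (submod_jrad_soc L) (submod_cycsm (a i *: (x : L^o))).
have [Q [sQ NQ PQN cover]] :=
  complement_family gen (submod_jrad_soc L) sP (fun z Nz => addsml (submod_cycsm _) Nz) NJ.
have simple_t := simple_over_family (x : L^o) lt_i NJ.
have [Qmax nQt] := complement_maximal (submod_jrad_soc L) sQ simple_t nt NQ PQN cover.
have [lQ _ _] := Qmax; apply/nQt/(lidealM (a i) lQ).
by apply: Hx => // s /jrad_soc_soc /NQ.
Qed.

(* [rad^3 L = 0] makes [rad L * rad L] left-annihilated by [rad L], hence
   part of the socle; the socle itself kills every [A]-module. *)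
Lemma radA_sq_ann (M : lmodType L) j k (y : M) : rad3_zero L ->
  (forall s (z : M), soc s -> s *: z = 0) -> radA j -> radA k -> j *: (k *: y) = 0.
Proof.
move=> rad3 socM /radA_jrad_soc [j1 [s1 [Hj1 Hs1 ->]]].
move=> /radA_jrad_soc [k1 [s2 [Hk1 Hs2 ->]]].
have soc_jk : soc (j1 * k1) by apply: jrad_ann_soc => l Hl; rewrite mulrA rad3.
rewrite [(k1 + s2) *: y]scalerDl (socM s2) // addr0 scalerDl (socM s1) // addr0.
by rewrite scalerA socM.
Qed.

(* If [d] is killed by [rad A] but [a i d] is not radical, then [L (a i d)] is
   simple and meets [r_A M] trivially; a complement of [r_A M + L (a i d)]
   over [r_A M] splits it off as a direct summand. *)
Lemma radA_ann_rA (M : lmodType L) (d : M) : modA M -> ~ has_simple_summand M ->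
  (forall j, radA j -> j *: d = 0) -> rA d.
Proof.
move=> [[gs gen] _] no_simple Hd; apply: NNPP => nd; have [Kmax Kjrad jrad1] := fam.
have NJ j (y : M) : jrad j -> rA (j *: y) by move=> /jrad_radA; apply: rA_scale.
have [i lt_i ny] := local_family_escape (submod_rA M) (NJ _ d jrad1) nd.
pose y := a i *: d.
have Ky l : K i l -> l *: y = 0.
  by move=> Kl; rewrite scalerA Hd //; exact: (jrad_radA (Kjrad i l lt_i Kl)).
have simple_y := cycsm_simple (Kmax i lt_i) Ky.
have y_rA x : cycsm y x -> rA x -> x = 0.
  have sW := submodI (submod_cycsm y) (submod_rA M).
  have [W0|Wy] := simple_y _ sW (fun x Wx => Wx.1); first by move=> Lx Rx; apply: W0.
  by case: ny; apply: (Wy y (cycsm_id y)).2.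
have sP := submod_addsm (submod_rA M) (submod_cycsm y).
have [Q [sQ NQ PQN cover]] :=
  complement_family gen (submod_rA M) sP (fun z Nz => addsml (submod_cycsm _) Nz) NJ.
apply: no_simple; exists (cycsm y), Q; split=> //; first exact: submod_cycsm.
  split=> [x|x Lx Qx]; last exact: (y_rA x Lx (PQN _ (addsmr (submod_rA M) Lx) Qx)).
  have [_ [q [[r [u [Rr Lu ->]]] Qq ->]]] := cover x.
  exists u, (r + q); split => //; first exact: (submodD sQ (NQ _ Rr) Qq).
  by rewrite addrAC addrC addrA.
split; [exact: submod_cycsm | | exact: simple_y].
exists y; split; first exact: cycsm_id.
by move=> y0; apply: ny; rewrite -/y y0; exact: submod0 (submod_rA M).
Qed.

End LocalFamily.

Section SimpleModule.
Variables (L : nzRingType) (S : lmodType L).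
Hypothesis simple_S : simple_mod S.

Lemma simple_ann_maximal (s : S) : s <> 0 ->
  maximal_left_ideal (fun l : L => l *: s = 0).
Proof.
move=> s0; have [_ _ S_min] := simple_S.
split; [split=> [|x y Hx Hy|b x Hx] | by rewrite scale1r | move=> J lJ annJ].
- exact: scale0r.
- by rewrite scalerDl Hx Hy addr0.
- by rewrite -scalerA Hx scaler0.
pose W x := exists2 l, J l & x = l *: s.
have sW : submod W.
  split; first by exists 0; [exact: lideal0 lJ | rewrite scale0r].
  move=> b _ _ [l Jl ->] [l' Jl' ->]; exists (b * l + l'); last by rewrite scalerDl scalerA.
  exact: (lidealD lJ (lidealM b lJ Jl) Jl').
have [W0|WS] := S_min W sW (fun _ _ => I); first by left => l Jl; apply: W0; exists l.
right; have [l Jl El] := WS s I.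
have J1l : J (1 - l) by apply: annJ; rewrite scalerBl scale1r -El subrr.
by rewrite -(subrK l 1); exact: (lidealD lJ J1l Jl).
Qed.

Lemma radA_ann_simple j (s : S) : modA S -> radA j -> j *: s = 0.
Proof.
move=> [_ socS] Hj; have [->|s0] := classic (s = 0); first by rewrite scaler0.
by apply: (Hj _ (simple_ann_maximal s0)) => x Hx; apply: socS.
Qed.

Lemma rA_simple (s : S) : modA S -> rA s -> s = 0.
Proof.
move=> mS [r [-> Hr]]; apply: big1_seq => p /andP [_ Hp].
exact: radA_ann_simple mS (Hr p Hp).
Qed.

End SimpleModule.

Section ShortExactSequence.
Variables (L : nzRingType) (C B S : lmodType L) (alpha : C -> B) (beta : B -> S).
Hypothesis exact_seq : ses alpha beta.

Lemma ses_cyclic_cover : simple_mod S ->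
  exists b0, forall y, exists l c, y = l *: b0 + alpha c.
Proof.
move=> [_ [s0 [_ s00]] S_min]; have [_ lb _ onto ker_beta] := exact_seq.
have [b0 Eb0] := onto s0; exists b0 => y.
have [beta0|cover] := S_min (cycsm (beta b0)) (submod_cycsm _) (fun _ _ => I).
  by case: s00; rewrite -Eb0; apply: beta0; exact: cycsm_id.
have [l El] := cover (beta y) I.
have /ker_beta [c Ec] : beta (y - l *: b0) = 0 by rewrite (linB lb) (linZ lb) El subrr.
by exists l, c; rewrite -Ec addrC subrK.
Qed.

Lemma F_seq_exact_of : (forall s : S, rA s -> s = 0) ->
  (forall c, rA (alpha c) -> rA c) -> F_seq_exact alpha beta.
Proof.
move=> S_rA0 reflect_rA; have [la lb inj_alpha onto ker_beta] := exact_seq.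
have beta_alpha c : beta (alpha c) = 0 by apply/ker_beta; exists c.
split; split.
- exact: reflect_rA.
- move=> y; split=> [/S_rA0 /ker_beta [c ->]|[c /(lin_rA lb)]].
    by exists c; rewrite subrr; exact: submod0 (submod_rA B).
  by rewrite (linB lb) beta_alpha subr0.
- move=> s; have [y <-] := onto s.
  by exists y; rewrite subrr; exact: submod0 (submod_rA S).
- by split=> ? H; [exact: (lin_rA la H) | exact: (lin_rA lb H)].
- by move=> c _ Hc; apply: inj_alpha; rewrite Hc (lin0 la).
- move=> y Ry; split=> [/ker_beta [c Ec]|[c [_ <-]]]; last exact: beta_alpha.
  by exists c; split => //; apply: reflect_rA; rewrite -Ec.
- by move=> s /S_rA0 ->; exists 0; split; [exact: submod0 (submod_rA B) | exact: lin0 lb].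
Qed.

Section RadicalReflection.
Variables (n : nat) (a : nat -> L) (K : nat -> L -> Prop).
Hypotheses (fam : local_family n a K) (rad3 : rad3_zero L) (simple_S : simple_mod S).

(* [B = L b0 + alpha C], and [rad A] kills [rad A b0]. *)
Lemma rA_ses_decomp y : modA B -> rA y ->
  exists z c, [/\ rA c, (forall j, radA j -> j *: z = 0) & y = z + alpha c].
Proof.
move=> [_ socB] [r [-> Hr]]; have [b0 cover] := ses_cyclic_cover simple_S.
have [la _ _ _ _] := exact_seq.
elim: r Hr => [|[j x] r IH] Hr.
  exists 0, 0; split; [exact: submod0 (submod_rA C) | by move=> *; rewrite scaler0 |].
  by rewrite big_nil (lin0 la) addr0.
have [|z [c [Rc Hz Ez]]] := IH; first by move=> p Hp; apply: Hr; rewrite inE Hp orbT.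
have Hj : radA j by apply: (Hr (j, x)); rewrite inE eqxx.
have [l [c' ->]] := cover x.
exists (j *: (l *: b0) + z), (j *: c' + c); split.
- exact: (submodD (submod_rA C) (rA_scale c' Hj) Rc).
- by move=> k Hk; rewrite scalerDr Hz // addr0; exact: (radA_sq_ann fam _ rad3 socB Hk Hj).
- by rewrite big_cons Ez /= (linD la) (linZ la) scalerDr addrACA.
Qed.

Lemma rA_reflect c : modA B -> modA C -> ~ has_simple_summand C ->
  rA (alpha c) -> rA c.
Proof.
move=> mB mC no_simple /(rA_ses_decomp mB) [z [c1 [Rc1 Hz Ez]]].
have [la _ inj_alpha _ _] := exact_seq.
have Ad : alpha (c - c1) = z by rewrite (linB la) Ez addrK.
have Hd j : radA j -> j *: (c - c1) = 0.
  by move=> Hj; apply: inj_alpha; rewrite (linZ la) Ad Hz // (lin0 la).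
rewrite -(subrK c1 c).
exact: (submodD (submod_rA C) (radA_ann_rA fam mC no_simple Hd) Rc1).
Qed.

End RadicalReflection.

End ShortExactSequence.

Theorem lemma3p1 (L : nzRingType)
  (hart : artin_algebra L) (hsi : selfinjective L)
  (hinf : inf_rep_type L) (hrad3 : rad3_zero L)
  (C B S : lmodType L) (alpha : C -> B) (beta : B -> S) :
  modA C -> modA B -> modA S ->
  ses alpha beta ->
  simple_mod S ->
  ~ has_simple_summand C ->
  F_seq_exact alpha beta.
Proof.
move=> mC mB mS exact_seq simple_S no_simple.
have [n [a [K fam]]] := artin_local_family hart.
apply: (F_seq_exact_of exact_seq (fun s => rA_simple simple_S mS)) => c.
exact: (rA_reflect exact_seq fam hrad3 simple_S mB mC no_simple).
Qed.
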